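(* Let $K$ be a finite field of odd characteristic, $\omega\in K$ a non-square, and $d:V\times V\to K$ a non-degenerate symmetric bilinear form with $n=\dim V$ and $\operatorname{disc}d=[\omega^c]$, $c\in\{0,1\}$. Then the set of addresses of orthogonal bases of $d$ is $\{(n-(c+2k):c+2k) : 0\le k\le\frac{n-c}{2}\}$. In particular there are $1+\lfloor\frac{n-c}{2}\rfloor$ addresses.
   Context: The discriminant $\operatorname{disc}d$ is the class modulo $(K^\times)^2$ of the determinant of the Gram matrix of $d$ in any basis; $[a]$ denotes $a(K^\times)^2$. An orthogonal basis of $d$ is a basis $\{x_1,\dots,x_n\}$ of $V$ with $d(x_i,x_j)=0$ for $i\neq j$. Its address is $(n-s:s)$, where $s$ is the number of $i$ with $d(x_i,x_i)$ a non-square in $K$. *)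

From HB Require Import structures.
From mathcomp Require Import all_boot all_order all_algebra.
Set Implicit Arguments. Unset Strict Implicit. Unset Printing Implicit Defensive.
Import Order.TTheory GRing.Theory Num.Theory.
Local Open Scope ring_scope.

Definition is_square (K : finFieldType) (x : K) : bool := [exists y : K, y ^+ 2 == x].

Definition gram (K : fieldType) (V : vectType K) (n : nat) (d : V -> V -> K)
  (b : n.-tuple V) : 'M[K]_n := \matrix_(i, j) d (tnth b i) (tnth b j).

Definition sym_bilinear (K : fieldType) (V : vectType K) (d : V -> V -> K) : Prop :=
  (forall a x y z, d (a *: x + y) z = a * d x z + d y z) /\
  (forall a x y z, d x (a *: y + z) = a * d x y + d x z) /\
  (forall x y, d x y = d y x).

Definition nondeg_form (K : fieldType) (V : vectType K) (d : V -> V -> K) : Prop :=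
  forall x, (forall y, d x y = 0) -> x = 0.

(* disc d = [a] : the determinant of the Gram matrix in a basis lies in a (K^x)^2
   (independent of the chosen basis) *)
Definition disc_is (K : fieldType) (V : vectType K) (d : V -> V -> K) (a : K) : Prop :=
  exists b : (\dim (fullv : {vspace V})).-tuple V,
    basis_of fullv b /\ exists u : K, u != 0 /\ \det (gram d b) = a * u ^+ 2.

Definition orth_basis (K : fieldType) (V : vectType K) (d : V -> V -> K)
  (b : (\dim (fullv : {vspace V})).-tuple V) : Prop :=
  basis_of fullv b /\ forall i j, i != j -> d (tnth b i) (tnth b j) = 0.

Definition nonsq_count (K : finFieldType) (V : vectType K) (d : V -> V -> K)
  (b : (\dim (fullv : {vspace V})).-tuple V) : nat :=
  #|[set i | ~~ is_square (d (tnth b i) (tnth b i))]|.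

(* the address (n - s : s) of an orthogonal basis, encoded as the pair (n - s, s) *)
Definition is_address (K : finFieldType) (V : vectType K) (d : V -> V -> K)
  (p : nat * nat) : Prop :=
  exists b, orth_basis d b /\
    p = ((\dim (fullv : {vspace V}) - nonsq_count d b)%N, nonsq_count d b).

From HB Require Import structures.
From mathcomp Require Import all_boot all_order all_algebra.
From mathcomp Require Import zify ring.
From Stdlib Require Import Classical.
Set Implicit Arguments. Unset Strict Implicit. Unset Printing Implicit Defensive.
Import Order.TTheory GRing.Theory Num.Theory.
Local Open Scope ring_scope.

(* In a finite field of odd characteristic the squares form half of K^x, so
   any nonzero t is of the form a x^2 + b y^2 whenever a, b != 0 (two sets of
   (|K| + 1) / 2 elements meet), and the product of two nonsquares is a square.
   Hence the diagonal entries (a, b) of two vectors of an orthogonal basis can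
   be replaced by (t, a b t) for any t != 0: t = 1 turns two nonsquares into
   squares and t = omega turns two squares into nonsquares, so the number s of
   nonsquare entries moves by 2 anywhere in [0, n]. Conversely the Gram
   determinant of an orthogonal basis is omega^s times a square, and it is
   omega^c times a square by the discriminant, so s = c mod 2. *)

Section Squares.
Variable K : finFieldType.
Hypothesis two_neq0 : (2%:R : K) != 0.

Lemma is_squareP (x : K) : reflect (exists y, x = y ^+ 2) (is_square x).
Proof. by apply: (iffP existsP) => -[y]; [move/eqP <- | move->]; exists y. Qed.

Lemma is_square_sqr (y : K) : is_square (y ^+ 2).
Proof. by apply/is_squareP; exists y. Qed.

Lemma is_square0 : is_square (0 : K).
Proof. by apply/is_squareP; exists 0; rewrite expr0n. Qed.

Lemma is_square1 : is_square (1 : K).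
Proof. by apply/is_squareP; exists 1; rewrite expr1n. Qed.

Lemma nonsquare_neq0 (x : K) : ~~ is_square x -> x != 0.
Proof. by apply: contraNneq => ->; apply: is_square0. Qed.

Definition squares := [set x : K | is_square x].

Lemma card_squares : (#|squares| * 2 = #|K| + 1)%N.
Proof.
have sq0 : (0 : K) \in squares by rewrite inE is_square0.
have fiber y : y \in squares :\ 0 -> #|[pred x : K | x ^+ 2 == y]| = 2%N.
  rewrite !inE => /andP[y0 /is_squareP[z ez]]; rewrite ez sqrf_eq0 in y0.
  have zNz : z != - z.
    rewrite -subr_eq0 opprK -mulr2n -mulr_natl mulf_neq0 //.
  transitivity #|pred2 z (- z)|; last by rewrite card2 zNz.
  by apply: eq_card => x; rewrite !inE /= ez eqf_sqr.
have fiber0 : #|[pred x : K | x ^+ 2 == 0]| = 1%N.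
  by rewrite -[RHS](card1 (0 : K)); apply: eq_card => x; rewrite !inE /= sqrf_eq0.
have -> : #|K| = (\sum_(y in squares) #|[pred x : K | x ^+ 2 == y]|)%N.
  rewrite -sum1_card (partition_big (fun x : K => x ^+ 2) (mem squares)) /=.
    by apply: eq_bigr => y _; rewrite -sum1_card.
  by move=> x _; rewrite inE is_square_sqr.
rewrite (big_setD1 0) //= fiber0 (eq_bigr (fun _ => 2%N)) // sum_nat_const.
by rewrite (cardsD1 0 squares) sq0; set m := #|squares :\ 0|; lia.
Qed.

Lemma setC_squares (w : K) : ~~ is_square w ->
  ~: squares = [set w * y | y in squares :\ 0].
Proof.
move=> nsq_w; have w0 := nonsquare_neq0 nsq_w.
apply/esym/eqP; rewrite eqEcard card_imset; last exact: mulfI.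
apply/andP; split.
  apply/subsetP => z /imsetP[y]; rewrite !inE => /andP[y0 /is_squareP[t ety]] ->.
  apply: contra nsq_w => /is_squareP[u hu]; apply/is_squareP.
  have t0 : t != 0 by rewrite -sqrf_eq0 -ety.
  rewrite ety in hu.
  by exists (u / t); rewrite expr_div_n -hu mulfK ?expf_neq0.
have sq0 : (0 : K) \in squares by rewrite inE is_square0.
have := cardsC squares; have := cardsD1 0 squares; rewrite sq0.
move: card_squares; set m := #|squares :\ 0|; set q := #|squares|; set k := #|K|; lia.
Qed.

Lemma is_squareM_nonsquare (u v : K) :
  ~~ is_square u -> ~~ is_square v -> is_square (u * v).
Proof.
move=> nsq_u nsq_v; have : u \in ~: squares by rewrite !inE.
rewrite (setC_squares nsq_v) => /imsetP[y].
rewrite !inE => /andP[_ /is_squareP[r ->]] ->.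
by apply/is_squareP; exists (v * r); ring.
Qed.

Lemma is_squareM (u v : K) : u != 0 -> v != 0 ->
  is_square (u * v) = (is_square u == is_square v).
Proof.
have sqM_sq (a b : K) : a != 0 -> is_square a -> is_square (a * b) = is_square b.
  move=> a0 /is_squareP[r er]; have r0 : r != 0 by rewrite -sqrf_eq0 -er.
  apply/idP/idP => /is_squareP[s es]; apply/is_squareP.
    by exists (s / r); rewrite expr_div_n -es er mulrC mulKf ?expf_neq0.
  by exists (r * s); rewrite er es exprMn.
move=> u0 v0; case: (boolP (is_square u)) => [sq_u|nsq_u].
  by rewrite sqM_sq // eqxx; case: (is_square v).
case: (boolP (is_square v)) => [sq_v|nsq_v]; last exact: is_squareM_nonsquare.
by rewrite mulrC sqM_sq // (negbTE nsq_u).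
Qed.

Lemma is_squareMsqr (u v : K) : v != 0 -> is_square (u * v ^+ 2) = is_square u.
Proof.
move=> v0; have [->|u0] := eqVneq u 0; first by rewrite mul0r.
by rewrite is_squareM ?expf_neq0 // is_square_sqr eqb_id.
Qed.

Lemma is_squareX_nonsquare (w : K) k : ~~ is_square w ->
  is_square (w ^+ k) = ~~ odd k.
Proof.
move=> nsq_w; have w0 := nonsquare_neq0 nsq_w.
elim: k => [|k IHk]; first by rewrite expr0 is_square1.
by rewrite exprS is_squareM ?expf_neq0 // IHk (negbTE nsq_w) /=; case: (odd k).
Qed.

Lemma is_square_prod (I : finType) (F : I -> K) : (forall i, F i != 0) ->
  is_square (\prod_i F i) = ~~ odd #|[set i | ~~ is_square (F i)]|.
Proof.
move=> F0; rewrite -sum1dep_card [X in odd X]big_mkcond /=.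
pose inv (p : K) k := p != 0 /\ is_square p = ~~ odd k.
suff [_ ->] : inv (\prod_i F i) (\sum_i (if ~~ is_square (F i) then 1 else 0))%N by [].
apply: (big_rec2 inv) => [|i p k _ [p0 IHp]]; first by rewrite /inv oner_neq0 is_square1.
split; first by rewrite mulf_neq0.
by rewrite is_squareM // IHp oddD; case: (is_square (F i)); case: (odd k).
Qed.

Lemma binary_diag_form_onto (a b t : K) : a != 0 -> b != 0 ->
  exists x y, t = a * x ^+ 2 + b * y ^+ 2.
Proof.
move=> a0 b0.
pose A := [set a * y | y in squares]; pose B := [set t - b * y | y in squares].
have cardA : #|A| = #|squares| by rewrite card_imset //; apply: mulfI.
have cardB : #|B| = #|squares|.
  by rewrite card_imset // => y1 y2 /addrI/oppr_inj/(mulfI b0).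
have : (0 < #|A :&: B|)%N.
  have := cardsUI A B; have := max_card (A :|: B); rewrite cardA cardB.
  move: card_squares; set q := #|squares|; set k := #|K|; lia.
case/card_gt0P => _ /setIP[/imsetP[x2 sq_x2 ->] /imsetP[y2 sq_y2 e]].
move: sq_x2 sq_y2 e; rewrite !inE => /is_squareP[x ->] /is_squareP[y ->] e.
by exists x, y; rewrite e subrK.
Qed.

End Squares.

Section SymmetricForm.
Variables (K : fieldType) (V : vectType K) (d : V -> V -> K).

Lemma det_gram_orthogonal m (b : m.-tuple V) :
  (forall i j, i != j -> d (tnth b i) (tnth b j) = 0) ->
  \det (gram d b) = \prod_i d (tnth b i) (tnth b i).
Proof.
move=> orthb; have -> : gram d b = diag_mx (\row_i d (tnth b i) (tnth b i)).
  apply/matrixP => i k; rewrite !mxE.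
  by have [->|ik] := eqVneq i k; rewrite ?mulr1n // mulr0n orthb.
by rewrite det_diag; apply: eq_bigr => i _; rewrite mxE.
Qed.

Hypothesis formDZl : forall a x y z, d (a *: x + y) z = a * d x z + d y z.
Hypothesis form_sym : forall x y, d x y = d y x.

Lemma form0l z : d 0 z = 0.
Proof.
have := formDZl 1 0 0 z; rewrite scale1r !addr0 mul1r => e.
by apply: (addrI (d 0 z)); rewrite addr0 -e.
Qed.

Lemma form0r z : d z 0 = 0.
Proof. by rewrite form_sym form0l. Qed.

Lemma formDl x y z : d (x + y) z = d x z + d y z.
Proof. by have := formDZl 1 x y z; rewrite scale1r mul1r. Qed.

Lemma formDr x y z : d z (x + y) = d z x + d z y.
Proof. by rewrite !(form_sym z) formDl. Qed.

Lemma formZl a x z : d (a *: x) z = a * d x z.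
Proof. by have := formDZl a x 0 z; rewrite addr0 form0l addr0. Qed.

Lemma formZr a x z : d z (a *: x) = a * d z x.
Proof. by rewrite !(form_sym z) formZl. Qed.

Lemma formBl x y z : d (x - y) z = d x z - d y z.
Proof. by rewrite formDl -scaleN1r formZl mulN1r. Qed.

Lemma formBr x y z : d z (x - y) = d z x - d z y.
Proof. by rewrite !(form_sym z) formBl. Qed.

Lemma form_sumr I (r : seq I) (P : pred I) (F : I -> V) z :
  d z (\sum_(i <- r | P i) F i) = \sum_(i <- r | P i) d z (F i).
Proof. by apply: (big_morph (d z)) => [x y|]; rewrite ?formDr ?form0r. Qed.

Lemma form_suml I (r : seq I) (P : pred I) (F : I -> V) z :
  d (\sum_(i <- r | P i) F i) z = \sum_(i <- r | P i) d (F i) z.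
Proof. by rewrite form_sym form_sumr; apply: eq_bigr => i _; rewrite form_sym. Qed.

Lemma orthogonal_free m (X : m.-tuple V) :
  (forall i j, i != j -> d (tnth X i) (tnth X j) = 0) ->
  (forall i, d (tnth X i) (tnth X i) != 0) -> free X.
Proof.
move=> orthX anisoX; apply/freeP => k sum0 i.
have := congr1 (d (tnth X i)) sum0; rewrite form0r form_sumr (bigD1 i) //= big1.
  by rewrite addr0 formZr -tnth_nth => /eqP; rewrite mulf_eq0 (negbTE (anisoX i)) orbF => /eqP.
by move=> j ji; rewrite formZr -tnth_nth orthX ?mulr0 // eq_sym.
Qed.

Local Notation n := (\dim (fullv : {vspace V})).

Lemma orth_basis_anisotropic (X : n.-tuple V) :
  (forall i j, i != j -> d (tnth X i) (tnth X j) = 0) ->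
  (forall i, d (tnth X i) (tnth X i) != 0) -> orth_basis d X.
Proof.
move=> orthX anisoX; split=> //.
by rewrite basisEfree orthogonal_free // subvf size_tuple leqnn.
Qed.

Lemma orth_basis_anisotropic_diag (b : n.-tuple V) :
  nondeg_form d -> orth_basis d b -> forall i, d (tnth b i) (tnth b i) != 0.
Proof.
move=> ndd [bb orthb] i; apply: contra_neq (free_not0 (basis_free bb) (mem_tnth i b)).
move=> dii; apply: ndd => y; have yb : y \in <<b>>%VS by rewrite (span_basis bb) memvf.
rewrite (coord_span yb) form_sumr big1 // => j _; rewrite formZr -tnth_nth.
by have [<-|ij] := eqVneq i j; rewrite ?dii ?orthb // mulr0.
Qed.

Lemma form_span_eq0 x (X : seq V) w :
  (forall v, v \in X -> d x v = 0) -> w \in <<X>>%VS -> d x w = 0.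
Proof.
move=> dX wX; rewrite (coord_span (X := in_tuple X) wX) form_sumr big1 // => i _.
by rewrite formZr dX ?mulr0 // mem_nth.
Qed.

Definition nondeg_on (U : {vspace V}) :=
  forall x, x \in U -> (forall y, y \in U -> d x y = 0) -> x = 0.

Hypothesis two_neq0 : (2%:R : K) != 0.

Lemma exists_anisotropic U : nondeg_on U -> U != 0%VS ->
  exists2 x, x \in U & d x x != 0.
Proof.
move=> ndU U0; apply: NNPP => noaniso.
have iso x : x \in U -> d x x = 0.
  by move=> xU; have [//|dx] := eqVneq (d x x) 0; case: noaniso; exists x.
have polar x y : x \in U -> y \in U -> d x y = 0.
  move=> xU yU; have := iso _ (memvD xU yU).
  rewrite formDl !formDr iso // iso // add0r addr0 (form_sym y) -mulr2n -mulr_natl.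
  by move/eqP; rewrite mulf_eq0 (negbTE two_neq0) => /eqP.
case/negP: U0; rewrite -subv0; apply/subvP => x xU; rewrite memv0; apply/eqP.
by apply: ndU => // y; apply: polar.
Qed.

Lemma orthogonal_compl_line U x : nondeg_on U -> x \in U -> d x x != 0 ->
  exists W : {vspace V}, [/\ (W <= U)%VS, \dim W = (\dim U).-1, nondeg_on W &
    forall w, w \in W -> d x w = 0].
Proof.
move=> ndU xU dx.
pose p y := y - (d x y / d x x) *: x.
have dxp y : d x (p y) = 0 by rewrite formBr formZr divfK ?subrr.
pose W := <<map p (vbasis U)>>%VS.
have WU : (W <= U)%VS.
  by apply/span_subvP => _ /mapP[y /vbasis_mem yU ->]; rewrite memvB ?memvZ.
have dxW w : w \in W -> d x w = 0 by apply: form_span_eq0 => _ /mapP[y _ ->].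
have x0 : x != 0 by apply: contraNneq dx => ->; rewrite form0l.
have capW : (<[x]> :&: W = 0)%VS.
  apply/eqP; rewrite -subv0; apply/subvP => v; rewrite memv_cap memv0.
  case/andP=> /vlineP[k ->] /dxW; rewrite formZr => /eqP.
  by rewrite mulf_eq0 (negbTE dx) orbF => /eqP ->; rewrite scale0r.
have UxW : U = (<[x]> + W)%VS.
  apply/eqP; rewrite eqEsubv subv_add WU -memvE xU !andbT.
  rewrite -(span_basis (vbasisP U)); apply/span_subvP => y yb.
  have -> : y = (d x y / d x x) *: x + p y by rewrite addrC subrK.
  by rewrite memv_add ?memvZ ?memv_line // memv_span // map_f.
exists W; split=> //.
- by rewrite UxW dimv_disjoint_sum // dim_vline x0.
- move=> y yW dyW; apply: ndU; first exact: (subvP WU).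
  move=> z; rewrite UxW => /memv_addP[_ /vlineP[k ->] [w wW ->]].
  by rewrite formDr formZr form_sym dxW // mulr0 dyW // addr0.
Qed.

Lemma exists_orthogonal_seq U : nondeg_on U ->
  exists s, [/\ size s = \dim U, {subset s <= U},
    pairwise (fun x y => d x y == 0) s & all (fun x => d x x != 0) s].
Proof.
move: {2}(\dim U) (erefl (\dim U)) => m; elim: m U => [|m IHm] U dimU ndU.
  by exists [::].
have [x xU dx] : exists2 x, x \in U & d x x != 0.
  by apply: exists_anisotropic; rewrite // -dimv_eq0 dimU.
have [W [WU dimW ndW dxW]] := orthogonal_compl_line ndU xU dx.
have [s [size_s sW orth_s aniso_s]] := IHm W (etrans dimW (congr1 predn dimU)) ndW.
exists (x :: s); split=> /=; rewrite ?dx //.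
- by rewrite size_s dimW dimU.
- by move=> y; rewrite inE => /predU1P[->|/sW /(subvP WU)].
- by rewrite orth_s andbT; apply/allP => y /sW /dxW ->.
Qed.

Lemma exists_orth_basis : nondeg_form d -> exists b, orth_basis d b.
Proof.
move=> ndd; have ndV : nondeg_on fullv by move=> x _ dx; apply: ndd => y; rewrite dx ?memvf.
have [s [size_s _ /(pairwiseP 0) orth_s /(all_nthP 0) aniso_s]] := exists_orthogonal_seq ndV.
have size_s' : size s == n by rewrite size_s.
exists (Tuple size_s'); apply: orth_basis_anisotropic => [i j|i]; rewrite !(tnth_nth 0) /=.
  move=> ij; have [lt_ij|lt_ji|/val_inj eq_ij] := ltngtP i j; last by rewrite eq_ij eqxx in ij.
  - by apply/eqP; apply: orth_s; rewrite ?inE ?size_s.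
  - by rewrite form_sym; apply/eqP; apply: orth_s; rewrite ?inE ?size_s.
by apply: aniso_s; rewrite size_s.
Qed.

Definition coord_mx m (b0 : n.-tuple V) (b : m.-tuple V) : 'M[K]_(m, n) :=
  \matrix_(i, j) coord b0 j (tnth b i).

Lemma gram_change_basis m (b0 : n.-tuple V) (b : m.-tuple V) : basis_of fullv b0 ->
  gram d b = coord_mx b0 b *m gram d b0 *m (coord_mx b0 b)^T.
Proof.
move=> bb0; apply/matrixP => i k; rewrite !mxE.
have inb0 v : v \in <<b0>>%VS by rewrite (span_basis bb0) memvf.
rewrite [X in d X _](coord_span (inb0 (tnth b i))) [X in d _ X](coord_span (inb0 (tnth b k))).
rewrite form_suml; under eq_bigr => j _ do rewrite formZl form_sumr.
under [RHS]eq_bigr => l _ do rewrite !mxE mulr_suml.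
rewrite exchange_big /=; apply: eq_bigr => j _; rewrite mulr_sumr.
by apply: eq_bigr => l _; rewrite formZr !mxE -!(tnth_nth 0); ring.
Qed.

Lemma orthogonal_pair_rotate u0 v0 x y : d u0 v0 = 0 ->
  let a := d u0 u0 in let c := d v0 v0 in
  let u := x *: u0 + y *: v0 in let v := (y * c) *: u0 - (x * a) *: v0 in
  [/\ d u v = 0, d u u = a * x ^+ 2 + c * y ^+ 2,
    d v v = a * c * (a * x ^+ 2 + c * y ^+ 2) &
    forall z, d u0 z = 0 -> d v0 z = 0 -> d u z = 0 /\ d v z = 0].
Proof.
move=> duv a c u v; have dvu : d v0 u0 = 0 by rewrite form_sym.
split; rewrite /u /v.
- by rewrite !(formDl, formZl, formBr, formZr) duv dvu -/a -/c; ring.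
- by rewrite !(formDl, formZl, formDr, formZr) duv dvu -/a -/c; ring.
- by rewrite !(formBl, formZl, formBr, formZr) duv dvu -/a -/c; ring.
- by move=> z du dv; rewrite !(formBl, formDl, formZl) du dv; split; ring.
Qed.

Lemma orth_basis_retarget (b : n.-tuple V) i j x y : nondeg_form d ->
  orth_basis d b -> i != j ->
  let a := d (tnth b i) (tnth b i) in let c := d (tnth b j) (tnth b j) in
  let t := a * x ^+ 2 + c * y ^+ 2 in t != 0 ->
  exists b' : n.-tuple V, [/\ orth_basis d b', d (tnth b' i) (tnth b' i) = t,
    d (tnth b' j) (tnth b' j) = a * c * t &
    forall k, k != i -> k != j -> tnth b' k = tnth b k].
Proof.
move=> ndd bb ij a c t t0; have [_ orthb] := bb.
have [uv uu vv off_pair] := orthogonal_pair_rotate x y (orthb i j ij).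
set u := x *: _ + _ in uv uu vv off_pair; set v := _ *: _ - _ in uv uu vv off_pair.
have off_ij k : k != i -> k != j -> d u (tnth b k) = 0 /\ d v (tnth b k) = 0.
  by move=> ki kj; apply: off_pair; rewrite orthb // eq_sym.
pose f k := if k == i then u else if k == j then v else tnth b k.
pose b' := [tuple f k | k < n].
have b'E k : tnth b' k = f k by rewrite tnth_mktuple.
have b'_i : tnth b' i = u by rewrite b'E /f eqxx.
have b'_j : tnth b' j = v by rewrite b'E /f eq_sym (negbTE ij) eqxx.
have b'_k k : k != i -> k != j -> tnth b' k = tnth b k.
  by move=> ki kj; rewrite b'E /f (negbTE ki) (negbTE kj).
have orth_ij k l : k != l -> (k == i) || (k == j) -> d (tnth b' k) (tnth b' l) = 0.
  move=> kl /orP[] /eqP ek; rewrite ek eq_sym in kl *.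
    have [->|lj] := eqVneq l j; first by rewrite b'_i b'_j.
    by rewrite b'_i b'_k //; case: (off_ij l kl lj).
  have [->|li] := eqVneq l i; first by rewrite b'_i b'_j form_sym.
  by rewrite b'_j b'_k //; case: (off_ij l li kl).
exists b'; rewrite b'_i b'_j; split=> //.
apply: orth_basis_anisotropic => [k l kl|k].
  case: (boolP ((k == i) || (k == j))) => [|/norP[ki kj]]; first exact: orth_ij.
  case: (boolP ((l == i) || (l == j))) => [|/norP[li lj]].
    by rewrite form_sym; apply: orth_ij; rewrite eq_sym.
  by rewrite !b'_k ?orthb.
have [->|ki] := eqVneq k i; first by rewrite b'_i uu.
have [->|kj] := eqVneq k j; first by rewrite b'_j vv !mulf_neq0 ?orth_basis_anisotropic_diag.
by rewrite b'_k ?orth_basis_anisotropic_diag.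
Qed.

End SymmetricForm.

Lemma cardsD2 (T : finType) (A : {set T}) i j : i != j ->
  #|A| = ((i \in A) + (j \in A) + #|A :\ i :\ j|)%N.
Proof. by move=> ij; rewrite (cardsD1 i A) (cardsD1 j (A :\ i)) !inE eq_sym ij addnA. Qed.

Lemma parity_decomp s c : (c <= 1)%N -> odd s = odd c -> s = (c + 2 * s./2)%N.
Proof.
by move=> c_le1 odd_s; rewrite -{1}[s]odd_double_half odd_s mul2n; case: (c) c_le1 => [|[]].
Qed.

Section Addresses.
Variables (K : finFieldType) (V : vectType K) (d : V -> V -> K).
Hypothesis two_neq0 : (2%:R : K) != 0.
Hypothesis formDZl : forall a x y z, d (a *: x + y) z = a * d x z + d y z.
Hypothesis form_sym : forall x y, d x y = d y x.
Hypothesis ndd : nondeg_form d.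

Local Notation n := (\dim (fullv : {vspace V})).
Local Notation nonsq b := [set i | ~~ is_square (d (tnth b i) (tnth b i))].

Lemma nonsq_count_retarget (b : n.-tuple V) i j t : orth_basis d b -> i != j -> t != 0 ->
  exists b', orth_basis d b' /\ nonsq_count d b' =
    (~~ is_square t + ~~ is_square (d (tnth b i) (tnth b i) * d (tnth b j) (tnth b j) * t)%R
     + #|nonsq b :\ i :\ j|)%N.
Proof.
move=> bb ij t0; have aniso := orth_basis_anisotropic_diag formDZl form_sym ndd bb.
have [x [y ht]] := binary_diag_form_onto two_neq0 t (aniso i) (aniso j).
rewrite ht in t0 *.
have [b' [bb' b'_i b'_j b'_k]] := orth_basis_retarget formDZl form_sym ndd bb ij t0.
exists b'; split=> //; rewrite /nonsq_count (cardsD2 _ ij) !inE b'_i b'_j.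
congr (_ + _)%N; apply: eq_card => k; rewrite !inE.
by have [//|kj] := eqVneq k j; have [//|ki] := eqVneq k i; rewrite /= b'_k.
Qed.

Lemma nonsq_count_sub2 (b : n.-tuple V) : orth_basis d b -> (2 <= nonsq_count d b)%N ->
  exists b', orth_basis d b' /\ nonsq_count d b' = (nonsq_count d b - 2)%N.
Proof.
move=> bb /card_gt1P[i [j []]]; rewrite !inE => nsq_i nsq_j ij.
have [b' [bb' cnt]] := nonsq_count_retarget bb ij (oner_neq0 K).
exists b'; split=> //; rewrite cnt mulr1 is_square1 is_squareM_nonsquare //.
by rewrite /nonsq_count [in RHS](cardsD2 _ ij) !inE nsq_i nsq_j subDnCA // subnn addn0.
Qed.

Lemma nonsq_count_add2 (w : K) (b : n.-tuple V) : ~~ is_square w -> orth_basis d b ->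
  (nonsq_count d b + 2 <= n)%N ->
  exists b', orth_basis d b' /\ nonsq_count d b' = (nonsq_count d b + 2)%N.
Proof.
move=> nsq_w bb le_n; have aniso := orth_basis_anisotropic_diag formDZl form_sym ndd bb.
have : (1 < #|~: nonsq b|)%N by rewrite cardsCs setCK card_ord; move: le_n; rewrite /nonsq_count; lia.
case/card_gt1P=> i [j []]; rewrite !inE !negbK => sq_i sq_j ij.
have w0 := nonsquare_neq0 nsq_w.
have [b' [bb' cnt]] := nonsq_count_retarget bb ij w0.
exists b'; split=> //; rewrite cnt !is_squareM ?mulf_neq0 ?aniso // sq_i sq_j (negbTE nsq_w).
by rewrite /nonsq_count [in RHS](cardsD2 _ ij) !inE sq_i sq_j /= addnC.
Qed.

Lemma nonsq_count_subn (b : n.-tuple V) k : orth_basis d b -> (2 * k <= nonsq_count d b)%N ->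
  exists b', orth_basis d b' /\ nonsq_count d b' = (nonsq_count d b - 2 * k)%N.
Proof.
elim: k => [|k IHk] bb le_s; first by exists b; rewrite subn0.
have [|b1 [bb1 s1]] := IHk bb; first lia.
have [|b2 [bb2 s2]] := nonsq_count_sub2 bb1; first by rewrite s1; lia.
by exists b2; split=> //; rewrite s2 s1; lia.
Qed.

Lemma nonsq_count_addn (w : K) (b : n.-tuple V) k : ~~ is_square w -> orth_basis d b ->
  (nonsq_count d b + 2 * k <= n)%N ->
  exists b', orth_basis d b' /\ nonsq_count d b' = (nonsq_count d b + 2 * k)%N.
Proof.
move=> nsq_w; elim: k => [|k IHk] bb le_n; first by exists b; rewrite addn0.
have [|b1 [bb1 s1]] := IHk bb; first lia.
have [|b2 [bb2 s2]] := nonsq_count_add2 nsq_w bb1; first by rewrite s1; lia.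
by exists b2; split=> //; rewrite s2 s1; lia.
Qed.

Lemma odd_nonsq_count (w : K) c (b : n.-tuple V) : ~~ is_square w ->
  disc_is d (w ^+ c) -> orth_basis d b -> odd (nonsq_count d b) = odd c.
Proof.
move=> nsq_w [b0 [bb0 [u [u0 det_b0]]]] [bb orthb].
have aniso := orth_basis_anisotropic_diag formDZl form_sym ndd (conj bb orthb).
have det_b := det_gram_orthogonal orthb.
have sq_det : is_square (\det (gram d b)) = ~~ odd (nonsq_count d b).
  by rewrite det_b is_square_prod.
have det0 : \det (gram d b) != 0 by rewrite det_b; apply/prodf_neq0.
move: sq_det det0; rewrite (gram_change_basis formDZl form_sym b bb0) !det_mulmx det_tr det_b0.
set P := \det _; have -> : P * (w ^+ c * u ^+ 2) * P = w ^+ c * (u * P) ^+ 2 by ring.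
rewrite mulf_eq0 negb_or sqrf_eq0 => sq_det /andP[_ uP0].
by move: sq_det; rewrite is_squareMsqr // is_squareX_nonsquare // => /negb_inj ->.
Qed.

Lemma is_address_iff (w : K) c : ~~ is_square w -> (c <= 1)%N -> disc_is d (w ^+ c) ->
  forall p, is_address d p <->
    exists k, (c + 2 * k <= n)%N /\ p = ((n - (c + 2 * k))%N, (c + 2 * k)%N).
Proof.
move=> nsq_w c_le1 disc_d p; split.
  move=> [b [bb ->]]; have odd_s := odd_nonsq_count nsq_w disc_d bb.
  have le_s : (nonsq_count d b <= n)%N by rewrite -[n]card_ord max_card.
  have e := parity_decomp c_le1 odd_s.
  by exists (nonsq_count d b)./2; rewrite -e.
move=> [k [le_n ->]].
have [b0 bb0] := exists_orth_basis formDZl form_sym two_neq0 ndd.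
have odd_s0 := odd_nonsq_count nsq_w disc_d bb0.
have e0 := parity_decomp c_le1 odd_s0.
have [|b1 [bb1 s1]] := nonsq_count_subn (k := (nonsq_count d b0)./2) bb0.
  by rewrite {2}e0 leq_addl.
have {}s1 : nonsq_count d b1 = c by rewrite s1 {1}e0 addnK.
have [|b2 [bb2 s2]] := nonsq_count_addn (k := k) nsq_w bb1; first by rewrite s1.
by exists b2; split=> //; rewrite s2 s1.
Qed.

End Addresses.

Theorem corollary6p3 (K : finFieldType) (V : vectType K) (d : V -> V -> K)
  (omega : K) (c : nat) :
  ~~ (2%N \in [pchar K]) ->
  ~~ is_square omega ->
  sym_bilinear d -> nondeg_form d ->
  (c <= 1)%N ->
  disc_is d (omega ^+ c) ->
  (forall p : nat * nat, is_address d p <->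
     exists k : nat, (c + 2 * k <= \dim (fullv : {vspace V}))%N /\
       p = ((\dim (fullv : {vspace V}) - (c + 2 * k))%N, (c + 2 * k)%N)) /\
  (exists s : seq (nat * nat), uniq s /\ (forall p, p \in s <-> is_address d p) /\
     size s = (1 + (\dim (fullv : {vspace V}) - c)./2)%N).
Proof.
move=> pchar2 nsq_omega [formDZl [_ form_sym]] ndd c_le1 disc_d.
have two_neq0 : (2%:R : K) != 0 by apply: contraNneq pchar2 => two0; rewrite inE two0 eqxx.
have addrE := is_address_iff two_neq0 formDZl form_sym ndd nsq_omega c_le1 disc_d.
split=> //; set n := \dim fullv.
have [b0 bb0] := exists_orth_basis formDZl form_sym two_neq0 ndd.
have /addrE[k0 [le_n _]] : is_address d (n - nonsq_count d b0, nonsq_count d b0)%N.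
  by exists b0.
exists [seq ((n - (c + 2 * k))%N, (c + 2 * k)%N) | k <- iota 0 (1 + (n - c)./2)].
split; last split; last by rewrite size_map size_iota.
- by rewrite map_inj_uniq ?iota_uniq // => k1 k2 [_]; lia.
move=> p; rewrite addrE; split.
  by move=> /mapP[k]; rewrite mem_iota -divn2 => lt_k ->; exists k; split=> //; lia.
by move=> [k [le_k ->]]; apply/mapP; exists k => //; rewrite mem_iota -divn2; lia.
Qed.
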